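(* For any two distinct jobs $j,k$, in the schedule produced by $1$-SORT we have $D(j,k)\le 2\,D^*(j,k)=2\min\{\sigma_j,\sigma_k\}$.
   Context: Setting: single machine, jobs $J=\{1,\dots,n\}$, each job $j$ with test time $t_j\ge0$ and processing time $p_j\ge0$ (revealed only when the test is executed); each job's test must be executed before its processing part, which may start any time after the test; operations are non-preemptive and the machine does one at a time. $\sigma_j=t_j+p_j$. Standing assumption (general position): no two of the $3n$ numbers $t_1,\dots,t_n,p_1,\dots,p_n,\sigma_1,\dots,\sigma_n$ are equal. Algorithm $1$-SORT: keep a priority queue of available operations, initially the test of every job $j$ with priority $t_j$; repeatedly remove a minimum-priority operation and execute it immediately; after executing the test of $j$, insert the processing part of $j$ with priority $p_j$. For a schedule and distinct jobs $j,k$, let $d_{k,j}$ be the total amount of time during which operations of $k$ are executed before the completion time of $j$, and $D(j,k)=d_{j,k}+d_{k,j}$, evaluated for the $1$-SORT schedule. $D^*(j,k)=\min\{\sigma_j,\sigma_k\}$. *)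

From HB Require Import structures.
From mathcomp Require Import all_boot all_order all_algebra.
Set Implicit Arguments. Unset Strict Implicit. Unset Printing Implicit Defensive.
Import Order.TTheory GRing.Theory Num.Theory.
Local Open Scope ring_scope.

Section OneSort.
Variables (R : realFieldType) (n : nat) (t p : 'I_n -> R).

(* An operation: (j, true) = test of job j, (j, false) = processing part of j. *)
Definition op := ('I_n * bool)%type.

(* Duration of an operation; it is also its priority in 1-SORT. *)
Definition dur (o : op) : R := if o.2 then t o.1 else p o.1.

Definition sigma (j : 'I_n) : R := t j + p j.

Definition minop (o0 : op) (Q : seq op) : op :=
  foldl (fun a b => if dur b < dur a then b else a) o0 Q.

Fixpoint run (fuel : nat) (Q : seq op) : seq op :=
  match fuel with
  | 0 => [::]
  | fuel'.+1 =>
    match Q with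
    | [::] => [::]
    | o0 :: Q' =>
      let o := minop o0 Q' in
      o :: run fuel' (rem o Q ++ (if o.2 then [:: (o.1, false)] else [::]))
    end
  end%N.

(* The sequence of operations executed by 1-SORT (2n operations in total). *)
Definition sched : seq op := run (2 * n) [seq (j, true) | j <- enum 'I_n].

(* Operations are executed immediately one after another from time 0. *)
Definition start (o : op) : R := \sum_(o' <- take (index o sched) sched) dur o'.
Definition compl (o : op) : R := start o + dur o.

Definition Cj (j : 'I_n) : R := compl (j, false).

(* d_{k,j}: total time during which operations of k are executed before C_j. *)
Definition dkj (k j : 'I_n) : R :=
  \sum_(o <- sched | o.1 == k)
     Num.max 0 (Num.min (compl o) (Cj j) - start o).

Definition D (j k : 'I_n) : R := dkj j k + dkj k j.

Definition Dstar (j k : 'I_n) : R := Num.min (sigma j) (sigma k).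

Definition general_position : Prop :=
  (forall i j : 'I_n, i != j ->
     [/\ t i != t j, p i != p j & sigma i != sigma j]) /\
  (forall i j : 'I_n, [/\ t i != p j, t i != sigma j & p i != sigma j]).

End OneSort.

(** 1-SORT always executes an available operation of least duration.  Let k be
    the job that completes first among j and k.  The processing part of j then
    lies entirely after C_k and does not contribute to D(j,k), so
    D(j,k) <= sigma_k + t_j, where t_j only counts if the test of j precedes the
    processing part of k.  Each term is bounded by comparing it with an
    operation of the other job that was available when it was chosen; this
    yields both D(j,k) <= 2 sigma_k and D(j,k) <= 2 sigma_j. *)
From HB Require Import structures.
From mathcomp Require Import all_boot all_order all_algebra.
From mathcomp Require Import zify lra.
Set Implicit Arguments. Unset Strict Implicit. Unset Printing Implicit Defensive.
Import Order.TTheory GRing.Theory Num.Theory.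
Local Open Scope ring_scope.

Section Run.
Variables (R : realFieldType) (n : nat) (t p : 'I_n -> R).

Definition followup (o : op n) : seq (op n) :=
  if o.2 then [:: (o.1, false)] else [::].

Lemma run_cons fuel o0 Q :
  run t p fuel.+1 (o0 :: Q) =
  minop t p o0 Q
    :: run t p fuel (rem (minop t p o0 Q) (o0 :: Q) ++ followup (minop t p o0 Q)).
Proof. by []. Qed.

Lemma minop_mem o0 Q : minop t p o0 Q \in o0 :: Q.
Proof.
rewrite /minop; elim: Q o0 => [|y Q IH] o0 /=; first by rewrite mem_seq1.
set a := if _ then _ else _.
have : a \in [:: o0; y] by rewrite /a; case: ifP; rewrite !inE eqxx ?orbT.
by rewrite !inE => /orP[] /eqP <-; move: (IH a); rewrite !inE => /orP[->|->];
  rewrite ?orbT.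
Qed.

Lemma minop_min o0 Q x : x \in o0 :: Q -> dur t p (minop t p o0 Q) <= dur t p x.
Proof.
rewrite /minop; elim: Q o0 x => [|y Q IH] o0 x /=; first by rewrite mem_seq1 => /eqP ->.
set a := if _ then _ else _.
have a_min : dur t p a <= Num.min (dur t p o0) (dur t p y).
  by rewrite /a le_min; case: ltP => [/ltW -> |->]; rewrite lexx.
rewrite !inE => /or3P[/eqP-> | /eqP-> | xQ]; last by apply: IH; rewrite inE xQ orbT.
all: apply: le_trans (IH a a (mem_head _ _)) _; apply: le_trans a_min _.
all: by rewrite ge_min lexx ?orbT.
Qed.

Definition available (Q done : seq (op n)) (z : op n) : bool :=
  (z \in Q) || ~~ z.2 && ((z.1, true) \in done).

Lemma run_greedy fuel Q a z :
  (a < size (run t p fuel Q))%N ->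
  available Q (take a (run t p fuel Q)) z -> z \notin take a (run t p fuel Q) ->
  dur t p (nth z (run t p fuel Q) a) <= dur t p z.
Proof.
elim: fuel Q a => [|f IH] [|o0 Q] a //; rewrite run_cons.
set o := minop t p o0 Q; set Q' := rem o (o0 :: Q) ++ followup o.
case: a => [|a]; rewrite [size _]/= [take _ _]/= [nth _ _ _]/=.
  by move=> _; rewrite /available in_nil andbF orbF => zQ _; apply: minop_min.
rewrite ltnS in_cons negb_or => ha avail /andP[zo zn]; apply: IH => //.
move: avail; rewrite /available (in_cons o) mem_cat.
case/orP=> [zQ | /andP[z2 /orP[/eqP ho | zt]]]; last by rewrite z2 zt orbT.
- have := perm_mem (perm_to_rem (minop_mem o0 Q)) z.
  by rewrite -/o zQ in_cons (negbTE zo) /= => /esym ->.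
- by rewrite /followup -ho; case: (z) z2 => ? [] //= _; rewrite mem_seq1 eqxx orbT.
Qed.

Lemma run_available fuel Q b z :
  (b < size (run t p fuel Q))%N ->
  available Q (take b (run t p fuel Q)) (nth z (run t p fuel Q) b).
Proof.
elim: fuel Q b => [|f IH] [|o0 Q] b //; rewrite run_cons.
set o := minop t p o0 Q; set Q' := rem o (o0 :: Q) ++ followup o.
case: b => [|b]; rewrite [size _]/= [take _ _]/= [nth _ _ _]/=.
  by rewrite /available minop_mem.
rewrite ltnS => /IH; rewrite /available (in_cons o) mem_cat.
case/orP=> [/orP[zrem | zf] | /andP[-> ->]]; last by rewrite !orbT.
- by rewrite (mem_rem zrem).
- by move: zf; rewrite /followup; case: (o) => ? [] //; rewrite mem_seq1 => /eqP -> /=;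
    rewrite eqxx orbT.
Qed.

(* Number of operations still to be executed from queue Q: a queued test also
   accounts for its processing part. *)
Definition work (Q : seq (op n)) : nat :=
  sumn [seq (if x.2 then 2 else 1)%N | x <- Q].

Definition proc_parts (Q : seq (op n)) : seq (op n) :=
  [seq (x.1, false) | x <- Q & x.2].

Lemma work_step Q o : o \in Q -> (work (rem o Q ++ followup o)).+1 = work Q.
Proof.
move=> oQ; rewrite /work (perm_sumn (perm_map _ (perm_to_rem oQ))).
by rewrite map_cat sumn_cat /followup; case: o {oQ} => ? [] /=; lia.
Qed.

Lemma step_perm Q o : o \in Q ->
  perm_eq (o :: (rem o Q ++ followup o) ++ proc_parts (rem o Q ++ followup o))
          (Q ++ proc_parts Q).
Proof.
move=> oQ; have Qo := perm_to_rem oQ.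
rewrite perm_sym (perm_trans (perm_cat Qo (perm_map _ (perm_filter _ Qo)))) //.
rewrite /proc_parts filter_cat map_cat /followup /=.
by case: (o.2) => /=; rewrite ?cats0 -?catA ?perm_cons.
Qed.

Lemma run_perm fuel Q :
  (work Q <= fuel)%N -> perm_eq (run t p fuel Q) (Q ++ proc_parts Q).
Proof.
elim: fuel Q => [|f IH] [|o0 Q] //; first by rewrite /work /=; case: ifP.
rewrite run_cons => hw; have oQ := minop_mem o0 Q.
rewrite -(permPr (step_perm oQ)) perm_cons IH //.
by rewrite -ltnS (work_step oQ).
Qed.

End Run.

Section Schedule.
Variables (R : realFieldType) (n : nat) (t p : 'I_n -> R).

Let tests : seq (op n) := [seq (j, true) | j <- enum 'I_n].

Lemma sched_perm : perm_eq (sched t p) (tests ++ [seq (j, false) | j <- enum 'I_n]).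
Proof.
have -> : [seq (j, false) | j <- enum 'I_n] = proc_parts tests.
  by rewrite /proc_parts filter_map filter_predT -map_comp.
apply: run_perm; rewrite /work /tests -[n in (_ <= 2 * n)%N]size_enum_ord.
by elim: (enum 'I_n) => //= j js; lia.
Qed.

Lemma sched_mem o : o \in sched t p.
Proof.
rewrite (perm_mem sched_perm) mem_cat; case: o => j [];
  by rewrite map_f ?orbT ?mem_enum.
Qed.

Definition pos (o : op n) : nat := index o (sched t p).

Lemma pos_inj : injective pos.
Proof. by move=> x y /(congr1 (nth x (sched t p))); rewrite !nth_index ?sched_mem. Qed.

Lemma pos_test_proc j : (pos (j, true) < pos (j, false))%N.
Proof.
have lt_size : (pos (j, false) < size (sched t p))%N by rewrite index_mem sched_mem.
have := run_available (j, false) lt_size; rewrite nth_index ?sched_mem //.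
have not_init : (j, false) \notin tests by apply/mapP => -[].
by rewrite /available (negbTE not_init) in_take ?sched_mem.
Qed.

Lemma sched_greedy o z :
  (pos o < pos z)%N -> z.2 || (pos (z.1, true) < pos o)%N -> dur t p o <= dur t p z.
Proof.
move=> oz z_avail.
have lt_size : (pos o < size (sched t p))%N by rewrite index_mem sched_mem.
have := run_greedy (z := z) lt_size; rewrite -/(sched t p) nth_index ?sched_mem //; apply.
  rewrite /available in_take ?sched_mem //; case: z z_avail {oz} => i [] /= z_avail.
    by rewrite map_f ?mem_enum.
  by rewrite z_avail orbT.
by rewrite in_take ?sched_mem // -leqNgt ltnW.
Qed.

End Schedule.

Section BusyTime.
Variables (R : realFieldType) (n : nat) (t p : 'I_n -> R).
Hypotheses (t_ge0 : forall j, 0 <= t j) (p_ge0 : forall j, 0 <= p j).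

Definition elapsed (m : nat) : R := \sum_(o <- take m (sched t p)) dur t p o.

Definition busy (o : op n) (C : R) : R :=
  Num.max 0 (Num.min (compl t p o) C - start t p o).

Lemma dur_ge0 o : 0 <= dur t p o.
Proof. by rewrite /dur; case: ifP. Qed.

Lemma elapsed_mono : {homo elapsed : m1 m2 / (m1 <= m2)%N >-> m1 <= m2}.
Proof.
move=> m1 m2 /subnKC <-; rewrite /elapsed takeD big_cat lerDl.
by apply: sumr_ge0 => o _; apply: dur_ge0.
Qed.

Lemma compl_elapsed o : compl t p o = elapsed (pos t p o).+1.
Proof.
rewrite /compl /start /elapsed (take_nth o) ?index_mem ?sched_mem //.
by rewrite nth_index ?sched_mem // -cats1 big_cat big_seq1.
Qed.

Lemma dkj_busy k j :
  dkj t p k j = busy (k, true) (Cj t p j) + busy (k, false) (Cj t p j).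
Proof.
rewrite /dkj (perm_big _ (sched_perm t p)) big_cat !big_map /=.
by rewrite -!enumT !big_enum_cond !big_pred1_eq.
Qed.

Lemma busy_le_dur o C : busy o C <= dur t p o.
Proof. by rewrite /busy ge_max dur_ge0 lerBlDl ge_min /compl addrC lexx. Qed.

Lemma busy_after_completion o k :
  (pos t p (k, false) < pos t p o)%N -> busy o (Cj t p k) <= 0.
Proof.
move=> ko; rewrite /busy ge_max lexx subr_le0 ge_min /Cj (compl_elapsed (k, false)).
by rewrite -[start t p o]/(elapsed (pos t p o)) (elapsed_mono ko) orbT.
Qed.

End BusyTime.

Section PairBound.
Variables (R : realFieldType) (n : nat) (t p : 'I_n -> R).
Hypotheses (t_ge0 : forall j, 0 <= t j) (p_ge0 : forall j, 0 <= p j).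

Lemma D_le_2Dstar_of_first_completed j k :
  (pos t p (k, false) < pos t p (j, false))%N -> D t p j k <= 2 * Dstar t p j k.
Proof.
move=> kj; rewrite /D /Dstar /sigma !dkj_busy minr_pMr // le_min.
have tj0 := t_ge0 j; have tk0 := t_ge0 k; have pj0 := p_ge0 j; have pk0 := p_ge0 k.
have jF_busy := busy_after_completion t_ge0 p_ge0 kj.
have kT_busy := busy_le_dur t_ge0 p_ge0 (k, true) (Cj t p j).
have kF_busy := busy_le_dur t_ge0 p_ge0 (k, false) (Cj t p j).
have jT_busy := busy_le_dur t_ge0 p_ge0 (j, true) (Cj t p k).
rewrite /dur /= in kT_busy kF_busy jT_busy.
have kTF := pos_test_proc t p k.
case: (ltngtP (pos t p (k, false)) (pos t p (j, true))) => [kF_jT | jT_kF | /pos_inj //].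
- have := busy_after_completion t_ge0 p_ge0 kF_jT.
  have := sched_greedy (ltn_trans kTF kF_jT) (orTb _).
  have := sched_greedy kF_jT (orTb _).
  by rewrite /dur /= => *; apply/andP; split; lra.
have := sched_greedy kj jT_kF.
case: (ltngtP (pos t p (k, true)) (pos t p (j, true))) => [kT_jT | jT_kT | ].
- have := sched_greedy kT_jT (orTb _).
  have := sched_greedy jT_kF kT_jT.
  by rewrite /dur /= => *; apply/andP; split; lra.
- have := sched_greedy jT_kT (orTb _).
  have := sched_greedy (ltn_trans kTF kj) jT_kT.
  by rewrite /dur /= => *; apply/andP; split; lra.
by move/pos_inj => [k_eq_j]; rewrite k_eq_j ltnn in kj.
Qed.
End PairBound.

Theorem mainTheorem5 (R : realFieldType) (n : nat) (t p : 'I_n -> R)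
  (ht : forall j, 0 <= t j) (hp : forall j, 0 <= p j)
  (hgp : general_position t p) (j k : 'I_n) (hjk : j != k) :
  D t p j k <= 2 * Dstar t p j k.
Proof.
case: (ltngtP (pos t p (j, false)) (pos t p (k, false))) => [jk | kj | ].
- by rewrite /D /Dstar addrC minC; apply: D_le_2Dstar_of_first_completed.
- exact: D_le_2Dstar_of_first_completed.
by move/pos_inj => [j_eq_k]; rewrite j_eq_k eqxx in hjk.
Qed.
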